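(* Fix $m\ge1$ and $\omega\in\mathbb Z\setminus\{0\}$. There exist constants $c_\omega>0$ and $C_{m,\omega}>0$ such that for every smooth closed immersed planar curve $\gamma$ of length $1$ with turning number $\omega$, $$\int_\gamma F_0^2\,ds\ \ge\ c_\omega\,\mathcal P-C_{m,\omega}E_m[\gamma]^2,$$ where $\kappa=2\pi\omega$, $F_0:=(-1)^{m+1}(k_{s^{2m+2}}+\kappa^2k_{s^{2m}})$ and $\mathcal P:=\int_\gamma k_{s^{2m+2}}^2\,ds$.
   Context: $s$ arclength, $k$ signed curvature, $k_{s^j}$ its $j$-th arclength derivative, $E_m[\gamma]=\frac12\int_\gamma k_{s^m}^2ds$, turning number $\frac1{2\pi}\int_\gamma k\,ds$. *)

From Stdlib Require Import Reals.
From Coquelicot Require Import Coquelicot.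
Open Scope R_scope.

Definition smooth (f : R -> R) : Prop := forall (n : nat) (t : R), ex_derive_n f n t.

(** A closed planar curve gamma = (gx, gy) of length 1 parametrized by arclength s in R,
    1-periodic (closed), smooth, with unit speed (immersed, arclength parametrization). *)
Definition closed_unit_length_arclength_curve (gx gy : R -> R) : Prop :=
  smooth gx /\ smooth gy /\
  (forall s, gx (s + 1) = gx s /\ gy (s + 1) = gy s) /\
  (forall s, (Derive gx s) ^ 2 + (Derive gy s) ^ 2 = 1).

Definition curvature (gx gy : R -> R) (s : R) : R :=
  Derive gx s * Derive_n gy 2 s - Derive gy s * Derive_n gx 2 s.

Definition kd (gx gy : R -> R) (j : nat) : R -> R := Derive_n (curvature gx gy) j.

Definition turning_number (gx gy : R -> R) : R :=
  / (2 * PI) * RInt (curvature gx gy) 0 1.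

Definition Energy (m : nat) (gx gy : R -> R) : R :=
  / 2 * RInt (fun s => (kd gx gy m s) ^ 2) 0 1.

Definition F0 (m : nat) (omega : Z) (gx gy : R -> R) (s : R) : R :=
  (-1) ^ (m + 1) *
  (kd gx gy (2 * m + 2) s + (2 * PI * IZR omega) ^ 2 * kd gx gy (2 * m) s).

Definition Pterm (m : nat) (gx gy : R -> R) : R :=
  RInt (fun s => (kd gx gy (2 * m + 2) s) ^ 2) 0 1.

(* Write K = 2 pi omega for the total curvature and theta(s) = int_0^s (k - K) for the
   deviation of the tangent angle K s + theta(s) from uniform rotation.  Closedness of the
   curve means int cos(K s + theta) = int sin(K s + theta) = 0; expanding to first order
   in theta, the mode-K Fourier coefficients of theta are bounded by int theta^2, which the
   Poincare inequality bounds by 2 E_m.  Integrating by parts 2m + 1 times, the mode-K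
   Fourier coefficients of u = k_{s^{2m}} are then of size K^{2m+1} E_m.  Finally
   u'' + K^2 u = +/- F_0 is a forced harmonic oscillator: by variation of constants, u is a
   Duhamel integral of F_0 (of size |F_0|_2 / K) plus a free oscillation a cos(K s) + b sin(K s)
   whose amplitudes are read off the mode-K coefficients of u.  This bounds int u^2, and
   hence P = int (F_0 -/+ K^2 u)^2, by c^{-1} int F_0^2 + C E_m^2. *)

From Stdlib Require Import Reals Lra Lia Psatz.
From Coquelicot Require Import Coquelicot.
Open Scope R_scope.

Lemma Derive_n_Derive (f : R -> R) n t : Derive_n (Derive f) n t = Derive_n f (S n) t.
Proof. change (Derive f) with (Derive_n f 1). now rewrite Derive_n_comp, Nat.add_1_r. Qed.

Lemma ex_derive_n_S (f : R -> R) n t :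
  (forall y, ex_derive f y) -> ex_derive_n (Derive f) n t -> ex_derive_n f (S n) t.
Proof.
  intros Hf Hn. destruct n as [|n]; [exact (Hf t)|].
  apply (ex_derive_ext (Derive_n (Derive f) n)); [apply Derive_n_Derive | exact Hn].
Qed.

Lemma smooth_ex_derive (f : R -> R) n t : smooth f -> ex_derive (Derive_n f n) t.
Proof. intros Hf. exact (Hf (S n) t). Qed.

Lemma smooth_Derive (f : R -> R) : smooth f -> smooth (Derive f).
Proof.
  intros Hf n t. destruct n as [|n]; [exact I|].
  apply (ex_derive_ext (Derive_n f (S n))); [intros; symmetry; apply Derive_n_Derive|].
  apply smooth_ex_derive, Hf.
Qed.

Lemma smooth_Derive_n (f : R -> R) n : smooth f -> smooth (Derive_n f n).
Proof. intros Hf; induction n; [exact Hf | now apply smooth_Derive]. Qed.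

Lemma smooth_minus (f g : R -> R) : smooth f -> smooth g -> smooth (fun x => f x - g x).
Proof. intros Hf Hg n t. apply ex_derive_n_minus; apply filter_forall; auto. Qed.

Lemma smooth_mult (f g : R -> R) : smooth f -> smooth g -> smooth (fun x => f x * g x).
Proof.
  intros Hf Hg n. revert f g Hf Hg.
  induction n as [|n IH] using Nat.strong_induction_le; intros f g Hf Hg t; [exact I|].
  assert (Df : forall y, ex_derive f y) by (intros; exact (Hf 1%nat y)).
  assert (Dg : forall y, ex_derive g y) by (intros; exact (Hg 1%nat y)).
  apply ex_derive_n_S; [intros; now apply ex_derive_mult|].
  apply (ex_derive_n_ext (fun x => Derive f x * g x + f x * Derive g x));
    [intros; symmetry; now apply Derive_mult|].
  apply ex_derive_n_plus; apply filter_forall; intros y k Hk;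
    apply IH; auto using smooth_Derive.
Qed.

Lemma continuous_pow_comp (f : R -> R) n x :
  continuous f x -> continuous (fun y => f y ^ n) x.
Proof.
  intros Hf. apply (continuous_comp f (fun z => z ^ n)); [exact Hf|].
  apply (ex_derive_continuous (fun z : R => z ^ n)). auto_derive. exact I.
Qed.

Ltac continuity_R := repeat match goal with
  | |- continuous (fun _ => ?c) _ => apply (continuous_const (U := R_UniformSpace) c)
  | |- continuous (fun y => y) _ => apply continuous_id
  | |- continuous (fun y => _ + _) _ => apply (continuous_plus (V := R_NormedModule))
  | |- continuous (fun y => _ - _) _ => apply (continuous_minus (V := R_NormedModule))
  | |- continuous (fun y => _ * _) _ => apply (continuous_mult (K := R_AbsRing))
  | |- continuous (fun y => - _) _ => apply (continuous_opp (V := R_NormedModule))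
  | |- continuous (fun y => Rabs _) _ => apply continuous_Rabs_comp
  | |- continuous (fun y => _ ^ _) _ => apply continuous_pow_comp
  | |- continuous (fun y => cos _) _ => apply continuous_cos_comp
  | |- continuous (fun y => sin _) _ => apply continuous_sin_comp
  | |- continuous (Rmult ?a) ?x => change (continuous (fun y => a * y) x)
  | |- continuous cos _ => apply continuous_cos
  | |- continuous sin _ => apply continuous_sin
  end; auto.

Lemma ex_RInt_cont (f : R -> R) a b : (forall x, continuous f x) -> ex_RInt f a b.
Proof. intros Hf. apply (ex_RInt_continuous (V := R_CompleteNormedModule)); auto. Qed.

Lemma RInt_le_cont (f g : R -> R) a b : a <= b ->
  (forall x, continuous f x) -> (forall x, continuous g x) ->
  (forall x, a <= x <= b -> f x <= g x) -> RInt f a b <= RInt g a b.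
Proof.
  intros Hab Hf Hg Hfg. apply RInt_le; auto using ex_RInt_cont.
  intros x Hx; apply Hfg; lra.
Qed.

Lemma RInt_ge0_cont (f : R -> R) a b : a <= b -> (forall x, continuous f x) ->
  (forall x, a <= x <= b -> 0 <= f x) -> 0 <= RInt f a b.
Proof.
  intros Hab Hf Hpos.
  replace 0 with (RInt (fun _ => 0) a b) by (rewrite RInt_const; apply Rmult_0_r).
  apply RInt_le_cont; auto. intros; continuity_R.
Qed.

Lemma RInt_cont_FTC (F f : R -> R) a b :
  (forall x, is_derive F x (f x)) -> (forall x, continuous f x) -> RInt f a b = F b - F a.
Proof. intros HF Hf. apply is_RInt_unique, (is_RInt_derive F f); auto. Qed.

Lemma continuous_of_is_derive (f df : R -> R) :
  (forall x, is_derive f x (df x)) -> forall x, continuous f x.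
Proof. intros Df x. apply (ex_derive_continuous f). eexists; apply Df. Qed.

(* Coquelicot's linearity lemmas, restated with the operations of [R] so that they rewrite. *)
Lemma RInt_Rplus (f g : R -> R) a b : ex_RInt f a b -> ex_RInt g a b ->
  RInt (fun x => f x + g x) a b = RInt f a b + RInt g a b.
Proof. exact (RInt_plus f g a b). Qed.

Lemma RInt_Rminus (f g : R -> R) a b : ex_RInt f a b -> ex_RInt g a b ->
  RInt (fun x => f x - g x) a b = RInt f a b - RInt g a b.
Proof. exact (RInt_minus f g a b). Qed.

Lemma RInt_Rmult_l (f : R -> R) c a b : ex_RInt f a b ->
  RInt (fun x => c * f x) a b = c * RInt f a b.
Proof. exact (RInt_scal f a b c). Qed.

Lemma RInt_Rpoint (f : R -> R) a : RInt f a a = 0.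
Proof. exact (RInt_point a f). Qed.

Lemma RInt_Rconst (c a b : R) : RInt (fun _ => c) a b = (b - a) * c.
Proof. exact (RInt_const a b c). Qed.

Lemma is_derive_0_const (A : R -> R) s : (forall x, is_derive A x 0) -> A s = A 0.
Proof.
  intros DA. assert (E : RInt (fun _ => 0) 0 s = A s - A 0)
    by (apply RInt_cont_FTC; [exact DA | intros; continuity_R]).
  rewrite RInt_Rconst in E. lra.
Qed.

(* Terms built from [RInt] or [Derive] live in a normed-module carrier that is only
   convertible to [R]; [ring] and [field] need the equation retyped over [R] first. *)
Ltac eq_R := match goal with |- @eq _ ?a ?b => change (@eq R a b) end.

Ltac ring_RInt := eq_R;
  repeat match goal with |- context [RInt ?f ?a ?b] =>
    let X := fresh "I" in set (X := RInt f a b); clearbody X; change R in X end;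
  ring.

Lemma RInt_parts (F f G g : R -> R) a b :
  (forall x, is_derive F x (f x)) -> (forall x, is_derive G x (g x)) ->
  (forall x, continuous f x) -> (forall x, continuous g x) ->
  RInt (fun x => f x * G x) a b = F b * G b - F a * G a - RInt (fun x => F x * g x) a b.
Proof.
  intros DF DG Cf Cg.
  pose proof (continuous_of_is_derive F f DF) as CF. pose proof (continuous_of_is_derive G g DG) as CG.
  assert (E : RInt (fun x => f x * G x + F x * g x) a b = F b * G b - F a * G a).
  { apply (RInt_cont_FTC (fun x => F x * G x)).
    - intros x; apply (Derive.is_derive_mult F G); auto.
    - intros; continuity_R. }
  rewrite RInt_Rplus in E by (apply ex_RInt_cont; intros; continuity_R). lra.
Qed.

Lemma RInt_sqr_le (g : R -> R) a b : a <= b -> (forall x, continuous g x) ->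
  (RInt g a b) ^ 2 <= (b - a) * RInt (fun x => g x ^ 2) a b.
Proof.
  intros Hab Hg. set (M := RInt g a b). set (I := RInt (fun x => g x ^ 2) a b).
  destruct (Req_dec a b) as [<-|Hne].
  { unfold M, I. rewrite !RInt_Rpoint. lra. }
  assert (E : RInt (fun x => ((b - a) * g x - M) ^ 2) a b = (b - a) * ((b - a) * I - M ^ 2)).
  { rewrite (RInt_ext _ (fun x => ((b - a) ^ 2 * g x ^ 2 + (- 2 * (b - a) * M) * g x) + M ^ 2))
      by (intros; ring_RInt).
    rewrite !RInt_Rplus, !RInt_Rmult_l, RInt_Rconst; try (apply ex_RInt_cont; intros; continuity_R).
    fold M I. ring_RInt. }
  assert (P : 0 <= RInt (fun x => ((b - a) * g x - M) ^ 2) a b).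
  { apply RInt_ge0_cont; auto. intros; continuity_R. intros; apply pow2_ge_0. }
  rewrite E in P. assert (0 < b - a) by lra. nra.
Qed.

Lemma RInt_le_RInt01 (f : R -> R) a b : 0 <= a <= b -> b <= 1 ->
  (forall x, continuous f x) -> (forall x, 0 <= x <= 1 -> 0 <= f x) ->
  RInt f a b <= RInt f 0 1.
Proof.
  intros Hab Hb Hf Hpos.
  rewrite <- (RInt_Chasles f 0 a 1), <- (RInt_Chasles f a b 1) by (apply ex_RInt_cont; auto).
  assert (0 <= RInt f 0 a) by (apply RInt_ge0_cont; [lra | auto | intros; apply Hpos; lra]).
  assert (0 <= RInt f b 1) by (apply RInt_ge0_cont; [lra | auto | intros; apply Hpos; lra]).
  unfold plus; simpl. lra.
Qed.

Lemma Rabs_RInt_le_RInt01 (f : R -> R) s t : 0 <= s <= 1 -> 0 <= t <= 1 ->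
  (forall x, continuous f x) -> Rabs (RInt f t s) <= RInt (fun x => Rabs (f x)) 0 1.
Proof.
  intros Hs Ht Hf.
  assert (Sub : forall a b, 0 <= a <= b -> b <= 1 -> Rabs (RInt f a b) <= RInt (fun x => Rabs (f x)) 0 1).
  { intros a b Hab Hb. eapply Rle_trans; [apply abs_RInt_le; [lra | now apply ex_RInt_cont]|].
    apply RInt_le_RInt01; auto. intros; continuity_R. intros; apply Rabs_pos. }
  destruct (Rle_lt_dec t s).
  - apply Sub; lra.
  - rewrite <- (opp_RInt_swap f s t) by (now apply ex_RInt_cont).
    change (Rabs (- RInt f s t) <= RInt (fun x => Rabs (f x)) 0 1).
    rewrite Rabs_Ropp. apply Sub; lra.
Qed.

Lemma Rabs_RInt01_le (f g : R -> R) : (forall x, continuous f x) -> (forall x, continuous g x) ->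
  (forall x, 0 <= x <= 1 -> Rabs (f x) <= g x) -> Rabs (RInt f 0 1) <= RInt g 0 1.
Proof.
  intros Cf Cg Hfg. eapply Rle_trans; [apply abs_RInt_le; [lra | now apply ex_RInt_cont]|].
  apply RInt_le_cont; [lra | intros; continuity_R | auto | auto].
Qed.

Lemma Rabs_le_RInt_Rabs_derive (g dg : R -> R) :
  (forall x, is_derive g x (dg x)) -> (forall x, continuous dg x) -> RInt g 0 1 = 0 ->
  forall s, 0 <= s <= 1 -> Rabs (g s) <= RInt (fun x => Rabs (dg x)) 0 1.
Proof.
  intros Dg Cdg Hmean s Hs. set (M := RInt (fun x => Rabs (dg x)) 0 1).
  pose proof (continuous_of_is_derive g dg Dg) as Cg.
  assert (Osc : forall t, 0 <= t <= 1 -> - M <= g s - g t <= M).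
  { intros t Ht. apply Rabs_le_between.
    rewrite <- (RInt_cont_FTC g dg t s) by auto. now apply Rabs_RInt_le_RInt01. }
  assert (Lo : RInt (fun _ => g s - M) 0 1 <= RInt g 0 1).
  { apply RInt_le_cont; [lra | intros; continuity_R | exact Cg |].
    intros t Ht. specialize (Osc t Ht). lra. }
  assert (Hi : RInt g 0 1 <= RInt (fun _ => g s + M) 0 1).
  { apply RInt_le_cont; [lra | exact Cg | intros; continuity_R |].
    intros t Ht. specialize (Osc t Ht). lra. }
  rewrite RInt_Rconst in Lo, Hi. apply Rabs_le. lra.
Qed.

Lemma RInt_Rabs_le_RInt_Rabs_derive (g dg : R -> R) :
  (forall x, is_derive g x (dg x)) -> (forall x, continuous dg x) -> RInt g 0 1 = 0 ->
  RInt (fun x => Rabs (g x)) 0 1 <= RInt (fun x => Rabs (dg x)) 0 1.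
Proof.
  intros Dg Cdg Hmean.
  pose proof (continuous_of_is_derive g dg Dg) as Cg.
  apply Rle_trans with (RInt (fun _ => RInt (fun x => Rabs (dg x)) 0 1) 0 1);
    [|rewrite RInt_Rconst; lra].
  apply RInt_le_cont; [lra | intros; continuity_R | intros; continuity_R |].
  intros; now apply (Rabs_le_RInt_Rabs_derive g dg).
Qed.

(** * Elementary trigonometric bounds *)

Lemma sub_le_of_derive_le (F G f g : R -> R) a b : a <= b ->
  (forall x, is_derive F x (f x)) -> (forall x, is_derive G x (g x)) ->
  (forall x, continuous f x) -> (forall x, continuous g x) ->
  (forall x, a <= x <= b -> f x <= g x) -> F b - F a <= G b - G a.
Proof.
  intros Hab DF DG Cf Cg Hfg.
  rewrite <- (RInt_cont_FTC F f), <- (RInt_cont_FTC G g) by auto.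
  now apply RInt_le_cont.
Qed.

Ltac derive_R := intros; auto_derive; repeat split; auto; try (eq_R; field; auto).

Lemma sin_le x : 0 <= x -> sin x <= x.
Proof.
  intros Hx. enough (sin x - sin 0 <= x - 0) by (rewrite sin_0 in *; lra).
  apply (sub_le_of_derive_le sin (fun t => t) cos (fun _ => 1));
    try (derive_R; fail); auto; try (intros; continuity_R; fail).
  intros; apply COS_bound.
Qed.

Lemma one_sub_cos_le x : 0 <= x -> 1 - cos x <= x ^ 2 / 2.
Proof.
  intros Hx. enough (- cos x - - cos 0 <= x ^ 2 / 2 - 0 ^ 2 / 2) by (rewrite cos_0 in *; lra).
  apply (sub_le_of_derive_le (fun t => - cos t) (fun t => t ^ 2 / 2) sin (fun t => t));
    try (derive_R; fail); auto; try (intros; continuity_R; fail).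
  intros t Ht; apply sin_le; lra.
Qed.

Lemma id_sub_sin_le x : 0 <= x -> x - sin x <= x ^ 2 / 2.
Proof.
  intros Hx. enough ((x - sin x) - (0 - sin 0) <= x ^ 2 / 2 - 0 ^ 2 / 2) by (rewrite sin_0 in *; lra).
  apply (sub_le_of_derive_le (fun t => t - sin t) (fun t => t ^ 2 / 2) (fun t => 1 - cos t) (fun t => t));
    try (derive_R; fail); auto; try (intros; continuity_R; fail).
  intros t Ht. destruct (Rle_lt_dec t 2).
  - pose proof (one_sub_cos_le t ltac:(lra)). nra.
  - pose proof (COS_bound t). lra.
Qed.

Lemma Rabs_cos_sub_1_le x : Rabs (cos x - 1) <= x ^ 2 / 2.
Proof.
  pose proof (COS_bound x). rewrite Rabs_left1 by lra.
  destruct (Rle_lt_dec 0 x) as [Hx|Hx].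
  - pose proof (one_sub_cos_le x Hx). lra.
  - pose proof (one_sub_cos_le (- x) ltac:(lra)). rewrite cos_neg in *. nra.
Qed.

Lemma Rabs_sin_sub_le x : Rabs (sin x - x) <= x ^ 2 / 2.
Proof.
  destruct (Rle_lt_dec 0 x) as [Hx|Hx].
  - pose proof (sin_le x Hx). pose proof (id_sub_sin_le x Hx).
    rewrite Rabs_left1 by lra. lra.
  - pose proof (sin_le (- x) ltac:(lra)). pose proof (id_sub_sin_le (- x) ltac:(lra)).
    rewrite sin_neg in *. rewrite Rabs_right by lra. nra.
Qed.

Lemma is_derive_RInt_0 (g : R -> R) x :
  (forall y, continuous g y) -> is_derive (fun s => RInt g 0 s) x (g x).
Proof.
  intros Cg. apply (is_derive_RInt (V := R_NormedModule) _ _ 0); [|auto].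
  apply filter_forall. intros b. apply (RInt_correct (V := R_CompleteNormedModule)).
  now apply ex_RInt_cont.
Qed.

Lemma RInt_mult_bounded_sqr_le (f g : R -> R) s : 0 <= s <= 1 ->
  (forall x, continuous f x) -> (forall x, continuous g x) -> (forall x, Rabs (g x) <= 1) ->
  (RInt (fun t => f t * g t) 0 s) ^ 2 <= RInt (fun t => f t ^ 2) 0 1.
Proof.
  intros Hs Cf Cg Hg.
  assert (Cfg2 : forall x, continuous (fun t => (f t * g t) ^ 2) x) by (intros; continuity_R).
  assert (Hfg : forall x, (f x * g x) ^ 2 <= f x ^ 2).
  { intros x. rewrite Rpow_mult_distr, <- (pow2_abs (g x)).
    pose proof (Rabs_pos (g x)). pose proof (Hg x). pose proof (pow2_ge_0 (f x)).
    assert (Rabs (g x) ^ 2 <= 1) by nra. nra. }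
  eapply Rle_trans; [apply RInt_sqr_le; [lra | intros; continuity_R]|].
  assert (0 <= RInt (fun t => (f t * g t) ^ 2) 0 s)
    by (apply RInt_ge0_cont; [lra | auto | intros; apply pow2_ge_0]).
  apply Rle_trans with (RInt (fun t => (f t * g t) ^ 2) 0 s); [nra|].
  apply Rle_trans with (RInt (fun t => f t ^ 2) 0 s).
  - apply RInt_le_cont; [lra | auto | intros; continuity_R | auto].
  - apply RInt_le_RInt01; [lra | lra | intros; continuity_R | intros; apply pow2_ge_0].
Qed.

Lemma sin_sqr_add_cos_sqr x : sin x ^ 2 + cos x ^ 2 = 1.
Proof. rewrite <- (sin2_cos2 x). unfold Rsqr. ring. Qed.

Lemma Rabs_cos_le_1 x : Rabs (cos x) <= 1.
Proof. apply Rabs_le. pose proof (COS_bound x). lra. Qed.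

Lemma Rabs_sin_le_1 x : Rabs (sin x) <= 1.
Proof. apply Rabs_le. pose proof (SIN_bound x). lra. Qed.

Lemma sqr_cos_sin_comb_le x a b : (a * cos x + b * sin x) ^ 2 <= a ^ 2 + b ^ 2.
Proof.
  pose proof (sin_sqr_add_cos_sqr x). pose proof (pow2_ge_0 (a * sin x - b * cos x)).
  replace (a ^ 2 + b ^ 2) with ((a ^ 2 + b ^ 2) * (sin x ^ 2 + cos x ^ 2)) by (rewrite H; ring).
  nra.
Qed.

Lemma Rabs_cos_sin_remainder_le a b h : Rabs a <= 1 -> Rabs b <= 1 ->
  Rabs (a * (cos h - 1) + b * (sin h - h)) <= h ^ 2.
Proof.
  intros Ha Hb. eapply Rle_trans; [apply Rabs_triang|]. rewrite !Rabs_mult.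
  pose proof (Rabs_cos_sub_1_le h). pose proof (Rabs_sin_sub_le h).
  pose proof (Rabs_pos a). pose proof (Rabs_pos b).
  pose proof (Rabs_pos (cos h - 1)). pose proof (Rabs_pos (sin h - h)). nra.
Qed.

Lemma sqr_mode_coefficient (K Y : R) m : ((- K ^ 2) ^ m * (K * Y)) ^ 2 = K ^ (4 * m + 2) * Y ^ 2.
Proof.
  assert (E : ((- K ^ 2) ^ m) ^ 2 = K ^ (4 * m)).
  { rewrite <- pow_mult, Nat.mul_comm, pow_mult, pow_mult. f_equal. ring. }
  rewrite Rpow_mult_distr, E, pow_add. ring.
Qed.

(** * Fourier modes and the forced harmonic oscillator *)

Section Mode.

(* [sin K = 0] and [cos K = 1], i.e. [K] is a multiple of [2 PI]: the mode [s |-> K s] is 1-periodic. *)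
Variable K : R.
Hypothesis K_neq0 : K <> 0.
Hypothesis sin_K : sin K = 0.
Hypothesis cos_K : cos K = 1.

Lemma RInt_cos_mode : RInt (fun s => cos (K * s)) 0 1 = 0.
Proof.
  rewrite (RInt_cont_FTC (fun s => sin (K * s) / K)); [|derive_R | intros; continuity_R].
  rewrite Rmult_1_r, Rmult_0_r, sin_K, sin_0. eq_R; field; auto.
Qed.

Lemma RInt_sin_mode : RInt (fun s => sin (K * s)) 0 1 = 0.
Proof.
  rewrite (RInt_cont_FTC (fun s => - cos (K * s) / K)); [|derive_R | intros; continuity_R].
  rewrite Rmult_1_r, Rmult_0_r, cos_K, cos_0. eq_R; field; auto.
Qed.

Lemma RInt_sin_cos_mode : RInt (fun s => sin (K * s) * cos (K * s)) 0 1 = 0.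
Proof.
  rewrite (RInt_cont_FTC (fun s => sin (K * s) ^ 2 / (2 * K))); [|derive_R | intros; continuity_R].
  rewrite Rmult_1_r, Rmult_0_r, sin_K, sin_0. eq_R; field; auto.
Qed.

Lemma RInt_cos_mode_sqr : RInt (fun s => cos (K * s) ^ 2) 0 1 = 1 / 2.
Proof.
  rewrite (RInt_cont_FTC (fun s => s / 2 + sin (K * s) * cos (K * s) / (2 * K)));
    [| |intros; continuity_R].
  - rewrite Rmult_1_r, Rmult_0_r, sin_K, sin_0. eq_R; field; auto.
  - intros x. auto_derive; [exact I|].
    pose proof (sin_sqr_add_cos_sqr (K * x)). eq_R. field_simplify; [|auto].
    replace (sin (K * x) ^ 2) with (1 - cos (K * x) ^ 2) by lra. field; auto.
Qed.

Lemma RInt_sin_mode_sqr : RInt (fun s => sin (K * s) ^ 2) 0 1 = 1 / 2.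
Proof.
  rewrite (RInt_ext _ (fun s => 1 - cos (K * s) ^ 2))
    by (intros; pose proof (sin_sqr_add_cos_sqr (K * x)); eq_R; lra).
  rewrite RInt_Rminus, RInt_Rconst, RInt_cos_mode_sqr by (apply ex_RInt_cont; intros; continuity_R).
  eq_R; field.
Qed.

Lemma RInt_derive_cos_mode (g dg : R -> R) :
  (forall x, is_derive g x (dg x)) -> (forall x, continuous dg x) -> g 1 = g 0 ->
  RInt (fun s => dg s * cos (K * s)) 0 1 = K * RInt (fun s => g s * sin (K * s)) 0 1.
Proof.
  intros Dg Cdg Hg.
  pose proof (continuous_of_is_derive g dg Dg) as Cg.
  rewrite (RInt_parts g dg (fun s => cos (K * s)) (fun s => - K * sin (K * s)));
    auto; [|derive_R | intros; continuity_R].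
  rewrite (RInt_ext _ (fun x => - K * (g x * sin (K * x)))) by (intros; ring_RInt).
  rewrite RInt_Rmult_l by (apply ex_RInt_cont; intros; continuity_R).
  rewrite Rmult_1_r, Rmult_0_r, cos_K, cos_0, Hg. ring_RInt.
Qed.

Lemma RInt_derive_sin_mode (g dg : R -> R) :
  (forall x, is_derive g x (dg x)) -> (forall x, continuous dg x) ->
  RInt (fun s => dg s * sin (K * s)) 0 1 = - K * RInt (fun s => g s * cos (K * s)) 0 1.
Proof.
  intros Dg Cdg.
  pose proof (continuous_of_is_derive g dg Dg) as Cg.
  rewrite (RInt_parts g dg (fun s => sin (K * s)) (fun s => K * cos (K * s)));
    auto; [|derive_R | intros; continuity_R].
  rewrite RInt_ext with (g := fun x => K * (g x * cos (K * x))) by (intros; ring_RInt).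
  rewrite RInt_Rmult_l by (apply ex_RInt_cont; intros; continuity_R).
  rewrite Rmult_1_r, Rmult_0_r, sin_K, sin_0. ring_RInt.
Qed.

Lemma harmonic_zero (z z1 : R -> R) :
  (forall x, is_derive z x (z1 x)) -> (forall x, is_derive z1 x (- K ^ 2 * z x)) ->
  z 0 = 0 -> z1 0 = 0 -> forall s, z s = 0.
Proof.
  intros Dz Dz1 z0 z10 s.
  assert (DW : forall x, is_derive (fun t => z1 t ^ 2 + K ^ 2 * z t ^ 2) x 0).
  { intros x. auto_derive; [split; [eexists; eauto | split; [eexists; eauto | exact I]]|].
    rewrite (is_derive_unique (fun y : R => z y) x _ (Dz x)),
            (is_derive_unique (fun y : R => z1 y) x _ (Dz1 x)). ring_RInt. }
  pose proof (is_derive_0_const _ s DW) as W. simpl in W. rewrite z0, z10 in W.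
  assert (0 < K ^ 2) by (apply pow2_gt_0; auto).
  pose proof (pow2_ge_0 (z1 s)). pose proof (pow2_ge_0 (z s)).
  assert (Z2 : z s ^ 2 = 0) by nra.
  destruct (Req_dec (z s) 0) as [|NZ]; [assumption|]. now destruct (pow_nonzero _ 2 NZ).
Qed.

Definition cos_moment (f : R -> R) (s : R) : R := RInt (fun t => f t * cos (K * t)) 0 s.
Definition sin_moment (f : R -> R) (s : R) : R := RInt (fun t => f t * sin (K * t)) 0 s.

(* The solution of [z'' + K^2 z = f] with [z 0 = z' 0 = 0]. *)
Definition duhamel (f : R -> R) (s : R) : R :=
  (sin (K * s) * cos_moment f s - cos (K * s) * sin_moment f s) / K.

Definition duhamel_derive (f : R -> R) (s : R) : R :=
  cos (K * s) * cos_moment f s + sin (K * s) * sin_moment f s.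

Section Duhamel.

Variable f : R -> R.
Hypothesis f_cont : forall x, continuous f x.

Lemma is_derive_cos_moment x : is_derive (cos_moment f) x (f x * cos (K * x)).
Proof. apply (is_derive_RInt_0 (fun t => f t * cos (K * t))). intros; continuity_R. Qed.

Lemma is_derive_sin_moment x : is_derive (sin_moment f) x (f x * sin (K * x)).
Proof. apply (is_derive_RInt_0 (fun t => f t * sin (K * t))). intros; continuity_R. Qed.

Ltac rewrite_moment_derives x :=
  rewrite (is_derive_unique (fun y : R => cos_moment f y) x _ (is_derive_cos_moment x)),
          (is_derive_unique (fun y : R => sin_moment f y) x _ (is_derive_sin_moment x)).

Lemma is_derive_duhamel x : is_derive (duhamel f) x (duhamel_derive f x).
Proof.
  unfold duhamel, duhamel_derive.
  auto_derive; [repeat split; eexists; eauto using is_derive_cos_moment, is_derive_sin_moment|].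
  rewrite_moment_derives x. eq_R; field; auto.
Qed.

Lemma is_derive_duhamel_derive x :
  is_derive (duhamel_derive f) x (f x - K ^ 2 * duhamel f x).
Proof.
  unfold duhamel, duhamel_derive.
  auto_derive; [repeat split; eexists; eauto using is_derive_cos_moment, is_derive_sin_moment|].
  rewrite_moment_derives x.
  assert (E : f x = sin (K * x) ^ 2 * f x + cos (K * x) ^ 2 * f x)
    by (rewrite <- Rmult_plus_distr_r, sin_sqr_add_cos_sqr; ring).
  eq_R. field_simplify; [|auto]. rewrite E at 3. ring.
Qed.

Lemma duhamel_0 : duhamel f 0 = 0.
Proof. unfold duhamel, cos_moment, sin_moment. rewrite !RInt_Rpoint. eq_R; field; auto. Qed.

Lemma harmonic_decomposition (u u1 : R -> R) :
  (forall x, is_derive u x (u1 x)) -> (forall x, is_derive u1 x (f x - K ^ 2 * u x)) ->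
  forall s, u s = duhamel f s + u 0 * cos (K * s) + u1 0 / K * sin (K * s).
Proof.
  intros Du Du1. set (a := u 0). set (b := u1 0 / K).
  assert (Z := harmonic_zero
    (fun s => u s - duhamel f s - a * cos (K * s) - b * sin (K * s))
    (fun s => u1 s - duhamel_derive f s + a * K * sin (K * s) - b * K * cos (K * s))).
  intros s. enough (u s - duhamel f s - a * cos (K * s) - b * sin (K * s) = 0) by lra.
  apply Z; clear Z.
  - intros x. auto_derive; [repeat split; eexists; eauto using is_derive_duhamel|].
    rewrite (is_derive_unique (fun y : R => u y) x _ (Du x)),
            (is_derive_unique (fun y : R => duhamel f y) x _ (is_derive_duhamel x)).
    ring_RInt.
  - intros x. auto_derive; [repeat split; eexists; eauto using is_derive_duhamel_derive|].
    rewrite (is_derive_unique (fun y : R => u1 y) x _ (Du1 x)),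
            (is_derive_unique (fun y : R => duhamel_derive f y) x _ (is_derive_duhamel_derive x)).
    unfold b. eq_R; field; auto.
  - rewrite duhamel_0, Rmult_0_r, cos_0, sin_0. unfold a. ring.
  - unfold duhamel_derive, cos_moment, sin_moment. rewrite !RInt_Rpoint, !Rmult_0_r, ?cos_0, ?sin_0.
    unfold b. eq_R; field; auto.
Qed.

Lemma duhamel_sqr_le s : 0 <= s <= 1 ->
  duhamel f s ^ 2 <= 2 * RInt (fun t => f t ^ 2) 0 1 / K ^ 2.
Proof.
  intros Hs.
  assert (HP : cos_moment f s ^ 2 <= RInt (fun t => f t ^ 2) 0 1).
  { apply (RInt_mult_bounded_sqr_le f (fun t => cos (K * t))); auto;
      [intros; continuity_R | intros; apply Rabs_cos_le_1]. }
  assert (HQ : sin_moment f s ^ 2 <= RInt (fun t => f t ^ 2) 0 1).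
  { apply (RInt_mult_bounded_sqr_le f (fun t => sin (K * t))); auto;
      [intros; continuity_R | intros; apply Rabs_sin_le_1]. }
  pose proof (sqr_cos_sin_comb_le (K * s) (- sin_moment f s) (cos_moment f s)).
  unfold duhamel. replace (((sin (K * s) * cos_moment f s - cos (K * s) * sin_moment f s) / K) ^ 2)
    with ((- sin_moment f s * cos (K * s) + cos_moment f s * sin (K * s)) ^ 2 / K ^ 2)
    by (eq_R; field; auto).
  apply Rmult_le_compat_r; [apply Rlt_le, Rinv_0_lt_compat, pow2_gt_0; auto|].
  replace ((- sin_moment f s) ^ 2) with (sin_moment f s ^ 2) in H by ring. lra.
Qed.

Lemma continuous_duhamel x : continuous (duhamel f) x.
Proof. revert x. apply (continuous_of_is_derive _ _ is_derive_duhamel). Qed.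

Lemma RInt_duhamel_sqr_le :
  RInt (fun s => duhamel f s ^ 2) 0 1 <= 2 * RInt (fun t => f t ^ 2) 0 1 / K ^ 2.
Proof.
  pose proof continuous_duhamel.
  apply Rle_trans with (RInt (fun _ => 2 * RInt (fun t => f t ^ 2) 0 1 / K ^ 2) 0 1);
    [|rewrite RInt_Rconst; lra].
  apply RInt_le_cont; [lra | intros; continuity_R | intros; continuity_R |].
  intros; now apply duhamel_sqr_le.
Qed.

Lemma RInt_duhamel_modes_sqr_le :
  (RInt (fun s => duhamel f s * cos (K * s)) 0 1) ^ 2 <= 2 * RInt (fun t => f t ^ 2) 0 1 / K ^ 2 /\
  (RInt (fun s => duhamel f s * sin (K * s)) 0 1) ^ 2 <= 2 * RInt (fun t => f t ^ 2) 0 1 / K ^ 2.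
Proof.
  pose proof continuous_duhamel. split; (eapply Rle_trans; [|exact RInt_duhamel_sqr_le]).
  - apply (RInt_mult_bounded_sqr_le _ (fun s => cos (K * s)));
      [lra | auto | intros; continuity_R | intros; apply Rabs_cos_le_1].
  - apply (RInt_mult_bounded_sqr_le _ (fun s => sin (K * s)));
      [lra | auto | intros; continuity_R | intros; apply Rabs_sin_le_1].
Qed.

Lemma harmonic_RInt_sqr_le (u u1 : R -> R) :
  (forall x, is_derive u x (u1 x)) -> (forall x, is_derive u1 x (f x - K ^ 2 * u x)) ->
  RInt (fun s => u s ^ 2) 0 1 <=
    68 / K ^ 2 * RInt (fun s => f s ^ 2) 0 1
    + 16 * ((RInt (fun s => u s * cos (K * s)) 0 1) ^ 2 + (RInt (fun s => u s * sin (K * s)) 0 1) ^ 2).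
Proof.
  intros Du Du1. pose proof (harmonic_decomposition u u1 Du Du1) as Dec.
  pose proof continuous_duhamel. pose proof (continuous_of_is_derive u u1 Du) as Cu.
  pose proof RInt_duhamel_sqr_le as Hv. destruct RInt_duhamel_modes_sqr_le as [HVc HVs].
  set (v := duhamel f) in *. set (a := u 0) in *. set (b := u1 0 / K) in *.
  set (Phi := RInt (fun s => f s ^ 2) 0 1) in *.
  set (Vc := RInt (fun s => v s * cos (K * s)) 0 1) in *.
  set (Vs := RInt (fun s => v s * sin (K * s)) 0 1) in *.
  (* the free oscillation [a cos + b sin] is read off the mode-[K] Fourier coefficients *)
  assert (Xc : RInt (fun s => u s * cos (K * s)) 0 1 = Vc + a / 2).
  { rewrite (RInt_ext _ (fun s => (v s * cos (K * s) + a * cos (K * s) ^ 2)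
                                  + b * (sin (K * s) * cos (K * s))))
      by (intros; rewrite Dec; ring_RInt).
    rewrite !RInt_Rplus, !RInt_Rmult_l, RInt_cos_mode_sqr, RInt_sin_cos_mode;
      try (apply ex_RInt_cont; intros; continuity_R).
    fold Vc. lra. }
  assert (Xs : RInt (fun s => u s * sin (K * s)) 0 1 = Vs + b / 2).
  { rewrite (RInt_ext _ (fun s => (v s * sin (K * s) + a * (sin (K * s) * cos (K * s)))
                                  + b * sin (K * s) ^ 2))
      by (intros; rewrite Dec; ring_RInt).
    rewrite !RInt_Rplus, !RInt_Rmult_l, RInt_sin_mode_sqr, RInt_sin_cos_mode;
      try (apply ex_RInt_cont; intros; continuity_R).
    fold Vs. lra. }
  assert (Hu : RInt (fun s => u s ^ 2) 0 1 <= RInt (fun s => 2 * v s ^ 2 + 2 * (a ^ 2 + b ^ 2)) 0 1).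
  { apply RInt_le_cont; [lra | intros; continuity_R | intros; continuity_R |].
    intros x _. rewrite Dec. pose proof (sqr_cos_sin_comb_le (K * x) a b).
    pose proof (pow2_ge_0 (v x - (a * cos (K * x) + b * sin (K * x)))). nra. }
  rewrite RInt_Rplus, RInt_Rmult_l, RInt_Rconst in Hu; try (apply ex_RInt_cont; intros; continuity_R).
  rewrite Xc, Xs.
  assert (0 <= Phi / K ^ 2).
  { apply Rmult_le_pos; [apply RInt_ge0_cont; [lra | intros; continuity_R | intros; apply pow2_ge_0]|].
    apply Rlt_le, Rinv_0_lt_compat, pow2_gt_0; auto. }
  pose proof (pow2_ge_0 (Vc + a / 2 + Vc)). pose proof (pow2_ge_0 (Vs + b / 2 + Vs)).
  replace (68 / K ^ 2 * Phi) with (68 * (Phi / K ^ 2)) by (eq_R; field; auto).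
  replace (2 * Phi / K ^ 2) with (2 * (Phi / K ^ 2)) in * by (eq_R; field; auto).
  nra.
Qed.

End Duhamel.

End Mode.

(** * Closed unit-speed curves *)

Definition one_periodic (f : R -> R) : Prop := forall s, f (s + 1) = f s.

Lemma one_periodic_Derive_n (f : R -> R) n : one_periodic f -> one_periodic (Derive_n f n).
Proof. intros Hf s. rewrite <- Derive_n_comp_trans. apply Derive_n_ext, Hf. Qed.

Section Curve.

Variables gx gy : R -> R.
Hypothesis curve : closed_unit_length_arclength_curve gx gy.

Lemma curvature_smooth : smooth (curvature gx gy).
Proof.
  destruct curve as [Hx [Hy _]]. unfold curvature.
  apply smooth_minus; apply smooth_mult.
  - now apply smooth_Derive.
  - now apply (smooth_Derive_n gy 2).
  - now apply smooth_Derive.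
  - now apply (smooth_Derive_n gx 2).
Qed.

Lemma curvature_periodic : one_periodic (curvature gx gy).
Proof.
  destruct curve as [_ [_ [Hp _]]].
  assert (Px : one_periodic gx) by (intros s; apply Hp).
  assert (Py : one_periodic gy) by (intros s; apply Hp).
  intros s. unfold curvature.
  assert (Dx : one_periodic (Derive gx)) by exact (one_periodic_Derive_n gx 1 Px).
  assert (Dy : one_periodic (Derive gy)) by exact (one_periodic_Derive_n gy 1 Py).
  now rewrite Dx, Dy, (one_periodic_Derive_n gx 2 Px), (one_periodic_Derive_n gy 2 Py).
Qed.

Lemma is_derive_kd j x : is_derive (kd gx gy j) x (kd gx gy (S j) x).
Proof. apply Derive_correct, smooth_ex_derive, curvature_smooth. Qed.

Lemma continuous_kd j x : continuous (kd gx gy j) x.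
Proof. revert x. apply (continuous_of_is_derive _ _ (is_derive_kd j)). Qed.

Lemma kd_1 j : kd gx gy j 1 = kd gx gy j 0.
Proof. rewrite <- (Rplus_0_l 1) at 1. apply one_periodic_Derive_n, curvature_periodic. Qed.

Lemma RInt_kd_S j : RInt (kd gx gy (S j)) 0 1 = 0.
Proof.
  rewrite (RInt_cont_FTC (kd gx gy j)), kd_1; [lra | apply is_derive_kd | apply continuous_kd].
Qed.

Lemma RInt_Rabs_kd_le i j : (1 <= i <= j)%nat ->
  RInt (fun s => Rabs (kd gx gy i s)) 0 1 <= RInt (fun s => Rabs (kd gx gy j s)) 0 1.
Proof.
  intros [Hi Hij]. induction Hij as [|j Hij IH]; [lra|].
  eapply Rle_trans; [exact IH|].
  destruct j as [|j]; [lia|].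
  apply RInt_Rabs_le_RInt_Rabs_derive; auto using is_derive_kd, continuous_kd, RInt_kd_S.
Qed.

Lemma unit_speed_acceleration (c d c' d' : R) : c ^ 2 + d ^ 2 = 1 -> c * c' + d * d' = 0 ->
  c' = - (c * d' - d * c') * d /\ d' = (c * d' - d * c') * c.
Proof.
  intros U Orth. split; apply Rminus_diag_uniq.
  - transitivity (c' * (1 - (c ^ 2 + d ^ 2)) + c * (c * c' + d * d')); [ring | rewrite U, Orth; ring].
  - transitivity (d' * (1 - (c ^ 2 + d ^ 2)) + d * (c * c' + d * d')); [ring | rewrite U, Orth; ring].
Qed.

Lemma frenet x :
  Derive (Derive gx) x = - curvature gx gy x * Derive gy x /\
  Derive (Derive gy) x = curvature gx gy x * Derive gx x.
Proof.
  destruct curve as [Hx [Hy [_ Hu]]].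
  assert (Ex : ex_derive (Derive gx) x) by exact (smooth_Derive gx Hx 1%nat x).
  assert (Ey : ex_derive (Derive gy) x) by exact (smooth_Derive gy Hy 1%nat x).
  unfold curvature.
  change (Derive_n gx 2 x) with (Derive (Derive gx) x).
  change (Derive_n gy 2 x) with (Derive (Derive gy) x).
  apply unit_speed_acceleration; [apply Hu|].
  assert (D : is_derive (fun y => Derive gx y ^ 2 + Derive gy y ^ 2) x
    (2 * (Derive gx x * Derive (Derive gx) x + Derive gy x * Derive (Derive gy) x))).
  { auto_derive; [split; auto|].
    change (Derive (fun y => Derive gx y) x) with (Derive (Derive gx) x).
    change (Derive (fun y => Derive gy y) x) with (Derive (Derive gy) x). ring_RInt. }
  assert (D0 : is_derive (fun y => Derive gx y ^ 2 + Derive gy y ^ 2) x 0).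
  { apply (is_derive_ext (fun _ => 1)); [intros; now rewrite Hu | derive_R]. }
  pose proof (is_derive_unique _ _ _ D) as U. rewrite (is_derive_unique _ _ _ D0) in U. lra.
Qed.

Lemma tangent_rotation (ph : R -> R) : (forall x, is_derive ph x (curvature gx gy x)) ->
  exists A B, A ^ 2 + B ^ 2 = 1 /\ forall s,
    Derive gx s = A * cos (ph s) - B * sin (ph s) /\ Derive gy s = A * sin (ph s) + B * cos (ph s).
Proof.
  intros Dph. destruct curve as [Hx [Hy [_ Hu]]].
  assert (Ex : forall y, ex_derive (Derive gx) y) by (intros; exact (smooth_Derive gx Hx 1%nat y)).
  assert (Ey : forall y, ex_derive (Derive gy) y) by (intros; exact (smooth_Derive gy Hy 1%nat y)).
  assert (Eph : forall y, ex_derive ph y) by (intros; eexists; eauto).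
  (* the tangent in the frame rotating with angle [ph] is constant *)
  assert (DA : forall x, is_derive (fun s => Derive gx s * cos (ph s) + Derive gy s * sin (ph s)) x 0).
  { intros x. auto_derive; [repeat split; auto|].
    change (Derive (fun y => Derive gx y) x) with (Derive (Derive gx) x).
    change (Derive (fun y => Derive gy y) x) with (Derive (Derive gy) x).
    destruct (frenet x) as [F1 F2].
    rewrite F1, F2, (is_derive_unique (fun y : R => ph y) x _ (Dph x)). ring_RInt. }
  assert (DB : forall x, is_derive (fun s => - Derive gx s * sin (ph s) + Derive gy s * cos (ph s)) x 0).
  { intros x. auto_derive; [repeat split; auto|].
    change (Derive (fun y => Derive gx y) x) with (Derive (Derive gx) x).
    change (Derive (fun y => Derive gy y) x) with (Derive (Derive gy) x).
    destruct (frenet x) as [F1 F2].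
    rewrite F1, F2, (is_derive_unique (fun y : R => ph y) x _ (Dph x)). ring_RInt. }
  exists (Derive gx 0 * cos (ph 0) + Derive gy 0 * sin (ph 0)),
         (- Derive gx 0 * sin (ph 0) + Derive gy 0 * cos (ph 0)).
  split; [|intros s; rewrite <- (is_derive_0_const _ s DA), <- (is_derive_0_const _ s DB)].
  - transitivity ((Derive gx 0 ^ 2 + Derive gy 0 ^ 2) * (sin (ph 0) ^ 2 + cos (ph 0) ^ 2)); [ring|].
    now rewrite Hu, sin_sqr_add_cos_sqr, Rmult_1_l.
  - pose proof (sin_sqr_add_cos_sqr (ph s)) as T. split.
    + transitivity (Derive gx s * (sin (ph s) ^ 2 + cos (ph s) ^ 2)); [rewrite T | ]; ring.
    + transitivity (Derive gy s * (sin (ph s) ^ 2 + cos (ph s) ^ 2)); [rewrite T | ]; ring.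
Qed.

Lemma RInt_cos_sin_angle (ph : R -> R) : (forall x, is_derive ph x (curvature gx gy x)) ->
  RInt (fun s => cos (ph s)) 0 1 = 0 /\ RInt (fun s => sin (ph s)) 0 1 = 0.
Proof.
  intros Dph. destruct (tangent_rotation ph Dph) as [A [B [AB T]]].
  destruct curve as [Hx [Hy [Hp _]]].
  pose proof (continuous_of_is_derive ph _ Dph) as Cph.
  assert (Closed : forall g : R -> R, smooth g -> g 1 = g 0 -> RInt (Derive g) 0 1 = 0).
  { intros g Hg Hg1. rewrite RInt_Derive, Hg1; [ring_RInt | intros; apply (Hg 1%nat) |].
    intros; apply (ex_derive_continuous (Derive g)), (smooth_Derive g Hg 1%nat). }
  destruct (Hp 0) as [Px Py]. rewrite Rplus_0_l in Px, Py.
  pose proof (Closed gx Hx Px) as Ix. pose proof (Closed gy Hy Py) as Iy.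
  rewrite (RInt_ext _ (fun s => A * cos (ph s) - B * sin (ph s))) in Ix by (intros; apply T).
  rewrite (RInt_ext _ (fun s => A * sin (ph s) + B * cos (ph s))) in Iy by (intros; apply T).
  rewrite RInt_Rminus, !RInt_Rmult_l in Ix; try (apply ex_RInt_cont; intros; continuity_R).
  rewrite RInt_Rplus, !RInt_Rmult_l in Iy; try (apply ex_RInt_cont; intros; continuity_R).
  revert Ix Iy. generalize (RInt (fun s => cos (ph s)) 0 1) (RInt (fun s => sin (ph s)) 0 1).
  intros X Y Ix Iy. change R in X, Y. split; eq_R.
  - transitivity (X * (A ^ 2 + B ^ 2)); [rewrite AB; ring|].
    transitivity (A * (A * X - B * Y) + B * (A * Y + B * X)); [ring | rewrite Ix, Iy; ring].
  - transitivity (Y * (A ^ 2 + B ^ 2)); [rewrite AB; ring|].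
    transitivity (A * (A * Y + B * X) - B * (A * X - B * Y)); [ring | rewrite Ix, Iy; ring].
Qed.

Variable K : R.
Hypothesis total_curvature : RInt (curvature gx gy) 0 1 = K.

Definition angle_defect (s : R) : R := RInt (fun t => curvature gx gy t - K) 0 s.

Lemma is_derive_angle_defect x : is_derive angle_defect x (curvature gx gy x - K).
Proof.
  apply (is_derive_RInt_0 (fun t => curvature gx gy t - K)).
  intros; continuity_R. apply (continuous_kd 0).
Qed.

Lemma continuous_angle_defect x : continuous angle_defect x.
Proof. revert x. apply (continuous_of_is_derive _ _ is_derive_angle_defect). Qed.

Lemma angle_defect_0 : angle_defect 0 = 0.
Proof. apply RInt_Rpoint. Qed.

Lemma angle_defect_1 : angle_defect 1 = 0.
Proof.
  unfold angle_defect. rewrite RInt_Rminus, RInt_Rconst, total_curvature; [ring_RInt|..];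
    apply ex_RInt_cont; intros; continuity_R; apply (continuous_kd 0).
Qed.

Lemma is_derive_angle x : is_derive (fun s => K * s + angle_defect s) x (curvature gx gy x).
Proof.
  auto_derive; [eexists; apply is_derive_angle_defect|].
  rewrite (is_derive_unique (fun y : R => angle_defect y) x _ (is_derive_angle_defect x)). ring_RInt.
Qed.

Lemma Rabs_angle_defect_le m s : (1 <= m)%nat -> 0 <= s <= 1 ->
  Rabs (angle_defect s) <= RInt (fun t => Rabs (kd gx gy m t)) 0 1.
Proof.
  intros Hm Hs. eapply Rle_trans.
  { apply Rabs_RInt_le_RInt01; [exact Hs | lra |]. intros; continuity_R. apply (continuous_kd 0). }
  apply Rle_trans with (RInt (fun t => Rabs (kd gx gy 1 t)) 0 1); [|apply RInt_Rabs_kd_le; lia].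
  apply (RInt_Rabs_le_RInt_Rabs_derive _ (kd gx gy 1)).
  - intros x. auto_derive; [eexists; apply (is_derive_kd 0)|].
    rewrite (is_derive_unique (fun y : R => curvature gx gy y) x _ (is_derive_kd 0 x)). ring_RInt.
  - apply continuous_kd.
  - exact angle_defect_1.
Qed.

Lemma angle_defect_sqr_le m s : (1 <= m)%nat -> 0 <= s <= 1 -> angle_defect s ^ 2 <= 2 * Energy m gx gy.
Proof.
  intros Hm Hs. eapply Rle_trans; [apply pow_maj_Rabs, (Rabs_angle_defect_le m s Hm Hs)|].
  eapply Rle_trans; [apply RInt_sqr_le; [lra | intros; continuity_R; apply continuous_kd]|].
  unfold Energy. rewrite Rminus_0_r, Rmult_1_l.
  rewrite (RInt_ext _ (fun t => kd gx gy m t ^ 2)) by (intros; apply pow2_abs). lra.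
Qed.

Lemma RInt_angle_defect_sqr_le m : (1 <= m)%nat ->
  RInt (fun s => angle_defect s ^ 2) 0 1 <= 2 * Energy m gx gy.
Proof.
  intros Hm. apply Rle_trans with (RInt (fun _ => 2 * Energy m gx gy) 0 1); [|rewrite RInt_Rconst; lra].
  apply RInt_le_cont; [lra | intros; continuity_R; apply continuous_angle_defect | intros; continuity_R |].
  intros; now apply angle_defect_sqr_le.
Qed.

Section Curve_modes.

Hypothesis K_neq0 : K <> 0.
Hypothesis sin_K : sin K = 0.
Hypothesis cos_K : cos K = 1.

Lemma RInt_angle_defect_modes_le m : (1 <= m)%nat ->
  Rabs (RInt (fun s => angle_defect s * sin (K * s)) 0 1) <= 2 * Energy m gx gy /\
  Rabs (RInt (fun s => angle_defect s * cos (K * s)) 0 1) <= 2 * Energy m gx gy.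
Proof.
  intros Hm. destruct (RInt_cos_sin_angle _ is_derive_angle) as [Ic Is].
  pose proof continuous_angle_defect as Ct.
  pose proof (RInt_angle_defect_sqr_le m Hm) as Hsq.
  (* expand [cos (K s + t)] and [sin (K s + t)] to first order in [t = angle_defect s] *)
  set (Rc := fun s => cos (K * s) * (cos (angle_defect s) - 1)
                      + (- sin (K * s)) * (sin (angle_defect s) - angle_defect s)).
  set (Rs := fun s => sin (K * s) * (cos (angle_defect s) - 1)
                      + cos (K * s) * (sin (angle_defect s) - angle_defect s)).
  assert (HRc : Rabs (RInt Rc 0 1) <= 2 * Energy m gx gy).
  { eapply Rle_trans; [|exact Hsq].
    apply Rabs_RInt01_le; [unfold Rc; intros; continuity_R | intros; continuity_R |].
    intros x _. apply Rabs_cos_sin_remainder_le;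
      [apply Rabs_cos_le_1 | rewrite Rabs_Ropp; apply Rabs_sin_le_1]. }
  assert (HRs : Rabs (RInt Rs 0 1) <= 2 * Energy m gx gy).
  { eapply Rle_trans; [|exact Hsq].
    apply Rabs_RInt01_le; [unfold Rs; intros; continuity_R | intros; continuity_R |].
    intros x _. apply Rabs_cos_sin_remainder_le; [apply Rabs_sin_le_1 | apply Rabs_cos_le_1]. }
  rewrite (RInt_ext _ (fun s => (cos (K * s) - angle_defect s * sin (K * s)) + Rc s)) in Ic
    by (intros; unfold Rc; rewrite cos_plus; ring_RInt).
  rewrite (RInt_ext _ (fun s => (sin (K * s) + angle_defect s * cos (K * s)) + Rs s)) in Is
    by (intros; unfold Rs; rewrite sin_plus; ring_RInt).
  rewrite !RInt_Rplus, RInt_Rminus, RInt_cos_mode in Ic by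
    (auto; apply ex_RInt_cont; intros; unfold Rc; continuity_R).
  rewrite !RInt_Rplus, RInt_sin_mode in Is by
    (auto; apply ex_RInt_cont; intros; unfold Rs; continuity_R).
  split.
  - replace (RInt (fun s => angle_defect s * sin (K * s)) 0 1) with (RInt Rc 0 1) by lra. exact HRc.
  - replace (RInt (fun s => angle_defect s * cos (K * s)) 0 1) with (- RInt Rs 0 1) by lra.
    now rewrite Rabs_Ropp.
Qed.

Lemma RInt_curvature_modes :
  RInt (fun s => curvature gx gy s * cos (K * s)) 0 1
    = K * RInt (fun s => angle_defect s * sin (K * s)) 0 1 /\
  RInt (fun s => curvature gx gy s * sin (K * s)) 0 1
    = - K * RInt (fun s => angle_defect s * cos (K * s)) 0 1.
Proof.
  assert (Ck : forall x, continuous (curvature gx gy) x) by apply (continuous_kd 0).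
  split.
  - rewrite (RInt_ext _ (fun s => (curvature gx gy s - K) * cos (K * s) + K * cos (K * s)))
      by (intros; ring_RInt).
    rewrite RInt_Rplus, RInt_Rmult_l, RInt_cos_mode by (auto; apply ex_RInt_cont; intros; continuity_R).
    rewrite (RInt_derive_cos_mode K cos_K angle_defect); auto using is_derive_angle_defect.
    + ring_RInt.
    + intros; continuity_R.
    + now rewrite angle_defect_0, angle_defect_1.
  - rewrite (RInt_ext _ (fun s => (curvature gx gy s - K) * sin (K * s) + K * sin (K * s)))
      by (intros; ring_RInt).
    rewrite RInt_Rplus, RInt_Rmult_l, RInt_sin_mode by (auto; apply ex_RInt_cont; intros; continuity_R).
    rewrite (RInt_derive_sin_mode K sin_K angle_defect); auto using is_derive_angle_defect.
    + ring_RInt.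
    + intros; continuity_R.
Qed.

Lemma RInt_kd_even_modes i :
  RInt (fun s => kd gx gy (2 * i) s * cos (K * s)) 0 1
    = (- K ^ 2) ^ i * RInt (fun s => curvature gx gy s * cos (K * s)) 0 1 /\
  RInt (fun s => kd gx gy (2 * i) s * sin (K * s)) 0 1
    = (- K ^ 2) ^ i * RInt (fun s => curvature gx gy s * sin (K * s)) 0 1.
Proof.
  induction i as [|i [IHc IHs]]; [split; now rewrite pow_O, Rmult_1_l|].
  replace (2 * S i)%nat with (S (S (2 * i))) by lia.
  rewrite <- tech_pow_Rmult.
  assert (P := kd_1); assert (D := is_derive_kd); assert (C := continuous_kd).
  split.
  - rewrite (RInt_derive_cos_mode K cos_K (kd gx gy (S (2 * i)))),
            (RInt_derive_sin_mode K sin_K (kd gx gy (2 * i)));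
      auto. rewrite IHc. ring_RInt.
  - rewrite (RInt_derive_sin_mode K sin_K (kd gx gy (S (2 * i)))),
            (RInt_derive_cos_mode K cos_K (kd gx gy (2 * i)));
      auto. rewrite IHs. ring_RInt.
Qed.

Lemma RInt_kd_modes_sqr_le m : (1 <= m)%nat ->
  (RInt (fun s => kd gx gy (2 * m) s * cos (K * s)) 0 1) ^ 2 <= K ^ (4 * m + 2) * (2 * Energy m gx gy) ^ 2 /\
  (RInt (fun s => kd gx gy (2 * m) s * sin (K * s)) 0 1) ^ 2 <= K ^ (4 * m + 2) * (2 * Energy m gx gy) ^ 2.
Proof.
  intros Hm. destruct (RInt_kd_even_modes m) as [Ec Es]. destruct RInt_curvature_modes as [Cc Cs].
  destruct (RInt_angle_defect_modes_le m Hm) as [Bs Bc].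
  assert (K_even : 0 <= K ^ (4 * m + 2)).
  { replace (4 * m + 2)%nat with (2 * (2 * m + 1))%nat by lia. rewrite pow_mult. apply pow_le, pow2_ge_0. }
  rewrite Ec, Cc, Es, Cs. rewrite <- Rabs_Ropp in Bc.
  replace (- K * RInt (fun s => angle_defect s * cos (K * s)) 0 1)
    with (K * - RInt (fun s => angle_defect s * cos (K * s)) 0 1) by ring.
  rewrite !sqr_mode_coefficient.
  split; apply Rmult_le_compat_l; auto; apply pow_maj_Rabs; assumption.
Qed.

Lemma RInt_kd_top_sqr_le m : (1 <= m)%nat ->
  RInt (fun s => kd gx gy (2 * m + 2) s ^ 2) 0 1 <=
    (2 + 136 * K ^ 2) * RInt (fun s => (kd gx gy (2 * m + 2) s + K ^ 2 * kd gx gy (2 * m) s) ^ 2) 0 1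
    + 256 * K ^ (4 * m + 6) * Energy m gx gy ^ 2.
Proof.
  intros Hm.
  set (u := kd gx gy (2 * m)). set (w := kd gx gy (2 * m + 2)). set (f := fun s => w s + K ^ 2 * u s).
  assert (Cu : forall x, continuous u x) by apply continuous_kd.
  assert (Cw : forall x, continuous w x) by apply continuous_kd.
  assert (Cf : forall x, continuous f x) by (intros; unfold f; continuity_R).
  assert (Du1 : forall x, is_derive (kd gx gy (S (2 * m))) x (f x - K ^ 2 * u x)).
  { intros x. replace (f x - K ^ 2 * u x) with (w x) by (unfold f; ring).
    unfold w. replace (2 * m + 2)%nat with (S (S (2 * m))) by lia. apply is_derive_kd. }
  pose proof (harmonic_RInt_sqr_le K K_neq0 sin_K f Cf u _ (is_derive_kd (2 * m)) Du1) as Hu.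
  destruct (RInt_kd_modes_sqr_le m Hm) as [Xc Xs]. fold u in Xc, Xs.
  assert (Hw : RInt (fun s => w s ^ 2) 0 1 <=
               RInt (fun s => 2 * f s ^ 2 + 2 * K ^ 4 * u s ^ 2) 0 1).
  { apply RInt_le_cont; [lra | intros; continuity_R | intros; continuity_R |].
    intros x _. unfold f. pose proof (pow2_ge_0 (w x + 2 * K ^ 2 * u x)). nra. }
  rewrite RInt_Rplus, !RInt_Rmult_l in Hw by (apply ex_RInt_cont; intros; continuity_R).
  change (RInt (fun s => (w s + K ^ 2 * u s) ^ 2) 0 1) with (RInt (fun s => f s ^ 2) 0 1).
  assert (K4 : 0 <= 2 * K ^ 4) by (pose proof (pow2_ge_0 (K ^ 2)); nra).
  assert (Hu' : 2 * K ^ 4 * RInt (fun s => u s ^ 2) 0 1 <=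
     2 * K ^ 4 * (68 / K ^ 2 * RInt (fun s => f s ^ 2) 0 1 + 32 * K ^ (4 * m + 2) * (2 * Energy m gx gy) ^ 2))
    by (apply Rmult_le_compat_l; lra).
  assert (E : 2 * K ^ 4 * (68 / K ^ 2 * RInt (fun s => f s ^ 2) 0 1
                           + 32 * K ^ (4 * m + 2) * (2 * Energy m gx gy) ^ 2)
              = 136 * K ^ 2 * RInt (fun s => f s ^ 2) 0 1 + 256 * K ^ (4 * m + 6) * Energy m gx gy ^ 2).
  { replace (4 * m + 6)%nat with (4 + (4 * m + 2))%nat by lia. rewrite (pow_add K 4 (4 * m + 2)).
    generalize (RInt (fun s => f s ^ 2) 0 1). intros I. change R in I. field. auto. }
  lra.
Qed.

End Curve_modes.

End Curve.

Lemma IZR_2PI_multiple (omega : Z) : omega <> 0%Z ->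
  2 * PI * IZR omega <> 0 /\ sin (2 * PI * IZR omega) = 0 /\ cos (2 * PI * IZR omega) = 1.
Proof.
  intros Hw. pose proof PI_RGT_0. pose proof (not_0_IZR _ Hw).
  assert (S : sin (PI * IZR omega) = 0) by (apply sin_eq_0_1; exists omega; ring).
  split; [|split].
  - apply Rmult_integral_contrapositive; split; [lra | auto].
  - apply sin_eq_0_1. exists (2 * omega)%Z. rewrite mult_IZR. ring.
  - replace (2 * PI * IZR omega) with (2 * (PI * IZR omega)) by ring.
    rewrite cos_2a_sin, S. ring.
Qed.

Lemma F0_sqr m omega gx gy s :
  F0 m omega gx gy s ^ 2 = (kd gx gy (2 * m + 2) s + (2 * PI * IZR omega) ^ 2 * kd gx gy (2 * m) s) ^ 2.
Proof.
  unfold F0. rewrite Rpow_mult_distr, <- pow_mult, Nat.mul_comm, pow_mult.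
  replace ((-1) ^ 2) with 1 by ring. rewrite pow1. ring.
Qed.

Lemma affine_bound_rearrange (A B P Phi E : R) : 0 < A -> 0 <= E ->
  P <= A * Phi + B * E -> Phi >= 1 / A * P - (B / A + 1) * E.
Proof.
  intros HA HE HP. apply Rle_ge.
  assert (H : 1 / A * P <= 1 / A * (A * Phi + B * E))
    by (apply Rmult_le_compat_l; [apply Rlt_le, Rdiv_lt_0_compat | ]; lra).
  replace (1 / A * (A * Phi + B * E)) with (Phi + B / A * E) in H by (field; lra).
  lra.
Qed.

Theorem mainTheorem7 (omega : Z) (homega : omega <> 0%Z) :
  exists c : R, 0 < c /\
  forall m : nat, (1 <= m)%nat ->
  exists C : R, 0 < C /\
    forall gx gy : R -> R,
      closed_unit_length_arclength_curve gx gy ->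
      turning_number gx gy = IZR omega ->
      RInt (fun s => (F0 m omega gx gy s) ^ 2) 0 1
        >= c * Pterm m gx gy - C * (Energy m gx gy) ^ 2.
Proof.
  destruct (IZR_2PI_multiple omega homega) as [K_neq0 [sin_K cos_K]].
  set (K := 2 * PI * IZR omega) in *.
  assert (A_pos : 0 < 2 + 136 * K ^ 2) by (pose proof (pow2_ge_0 K); lra).
  exists (1 / (2 + 136 * K ^ 2)). split; [apply Rdiv_lt_0_compat; lra|].
  intros m Hm.
  assert (B_nonneg : 0 <= 256 * K ^ (4 * m + 6) / (2 + 136 * K ^ 2)).
  { replace (4 * m + 6)%nat with (2 * (2 * m + 3))%nat by lia. rewrite pow_mult.
    apply Rmult_le_pos; [|apply Rlt_le, Rinv_0_lt_compat; lra].
    apply Rmult_le_pos; [lra | apply pow_le, pow2_ge_0]. }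
  exists (256 * K ^ (4 * m + 6) / (2 + 136 * K ^ 2) + 1). split; [lra|].
  intros gx gy curve turning.
  assert (Tot : RInt (curvature gx gy) 0 1 = K).
  { unfold turning_number in turning. unfold K. rewrite <- turning. pose proof PI_RGT_0.
    generalize (RInt (curvature gx gy) 0 1). intros I. change R in I. eq_R. field. lra. }
  rewrite (RInt_ext _ _ _ _ (fun s _ => F0_sqr m omega gx gy s)).
  apply affine_bound_rearrange; [lra | apply pow2_ge_0|].
  exact (RInt_kd_top_sqr_le gx gy curve K Tot K_neq0 sin_K cos_K m Hm).
Qed.
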